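(* For a restless bandit and a family $\mathcal F\subseteq2^{N^{\{0,1\}}}$ as in the context, suppose $w^S_j>0$ for all $S\in\mathcal F$ and $j\in N^{\{0,1\}}$. Then for every $S\in\mathcal F$ and $j\in S$, with vectors indexed by $N$: (a) $\mathbf v^{S\setminus\{j\}}-\mathbf v^S=\dfrac{c^S_j}{w^S_j}\,(\mathbf b^S-\mathbf b^{S\setminus\{j\}})=\dfrac{c^{S\setminus\{j\}}_j}{w^{S\setminus\{j\}}_j}\,(\mathbf b^S-\mathbf b^{S\setminus\{j\}})$; (b) $\dfrac{c^S_j}{w^S_j}=\dfrac{c^{S\setminus\{j\}}_j}{w^{S\setminus\{j\}}_j}$; (c) $\mathbf c^S-\mathbf c^{S\setminus\{j\}}=\dfrac{c^S_j}{w^S_j}\,(\mathbf w^S-\mathbf w^{S\setminus\{j\}})$.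
   Context: Restless bandit: finite state space $N=N^{\{0,1\}}\cup N^{\{1\}}$ (disjoint); actions $a\in\{0,1\}$; one-period costs $h^a_i$; transition probabilities $p^a_{ij}$, with $p^1_{ij}=p^0_{ij}$ and $h^1_i=h^0_i$ for $i\in N^{\{1\}}$; discount factor $\beta\in(0,1)$; activity weights $\theta^1_j>0$. For $S\subseteq N^{\{0,1\}}$ the $S$-active policy is active on $S\cup N^{\{1\}}$ and passive elsewhere; under it, from $X(0)=i$: $v^S_i=E_i[\sum_{t\ge0}h^{a(t)}_{X(t)}\beta^t]$, $b^S_i=E_i[\sum_{t\ge0}\theta^1_{X(t)}a(t)\beta^t]$; $\mathbf v^S=(v^S_i)_{i\in N}$, $\mathbf b^S=(b^S_i)_{i\in N}$. Marginal workloads $w^S_i=\theta^1_i1\{i\in N^{\{0,1\}}\}+\beta\sum_j(p^1_{ij}-p^0_{ij})b^S_j$, marginal costs $c^S_i=h^0_i-h^1_i+\beta\sum_j(p^0_{ij}-p^1_{ij})v^S_j$, $\mathbf w^S=(w^S_i)_{i\in N}$, $\mathbf c^S=(c^S_i)_{i\in N}$. *)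

From HB Require Import structures.
From mathcomp Require Import all_boot all_order all_algebra.
From mathcomp Require Import all_classical all_reals all_analysis.
Set Implicit Arguments. Unset Strict Implicit. Unset Printing Implicit Defensive.
Import Order.TTheory GRing.Theory Num.Theory.
Local Open Scope ring_scope.

(* N01 : {set 'I_n} is N^{0,1}; its complement ~: N01 is N^{1}.
   P0, P1 : passive / active transition matrices, h0, h1 : passive / active
   one-period costs, theta : activity weights theta^1, beta : discount factor. *)
Section Bandit.
Variables (R : realType) (n : nat) (N01 : {set 'I_n})
  (P0 P1 : 'M[R]_n) (h0 h1 : 'I_n -> R) (theta : 'I_n -> R) (beta : R).

Definition stochastic (P : 'M[R]_n) : Prop :=
  (forall i j, 0 <= P i j) /\ (forall i, \sum_(j < n) P i j = 1).

Definition bandit_model : Prop :=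
  [/\ stochastic P0, stochastic P1,
      (forall i j, i \notin N01 -> P1 i j = P0 i j),
      (forall i, i \notin N01 -> h1 i = h0 i) &
      (forall j, 0 < theta j) /\ (0 < beta < 1)].

Definition active (S : {set 'I_n}) (i : 'I_n) : bool := (i \in S) || (i \notin N01).

Definition PS (S : {set 'I_n}) : 'M[R]_n :=
  \matrix_(i, j) (if active S i then P1 i j else P0 i j).

Definition hS (S : {set 'I_n}) : 'cV[R]_n :=
  \col_i (if active S i then h1 i else h0 i).
Definition thS (S : {set 'I_n}) : 'cV[R]_n :=
  \col_i (if active S i then theta i else 0).

(* E_i[ sum_{t>=0} f(X(t)) beta^t ] under the S-active policy:
   E_i[f(X(t))] = ((PS S)^t f)_i, and the infinite sum is the limit of
   partial sums *)
Definition disc_total (S : {set 'I_n}) (f : 'cV[R]_n) (i : 'I_n) : R :=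
  limn (fun N : nat => \sum_(t < N) (beta ^+ t * (((PS S) ^+ t *m f) i ord0))).

Definition v (S : {set 'I_n}) (i : 'I_n) : R := disc_total S (hS S) i.
Definition b (S : {set 'I_n}) (i : 'I_n) : R := disc_total S (thS S) i.

Definition w (S : {set 'I_n}) (i : 'I_n) : R :=
  theta i * (i \in N01)%:R + beta * \sum_(j < n) (P1 i j - P0 i j) * b S j.
Definition c (S : {set 'I_n}) (i : 'I_n) : R :=
  h0 i - h1 i + beta * \sum_(j < n) (P0 i j - P1 i j) * v S j.

End Bandit.

From HB Require Import structures.
From mathcomp Require Import all_boot all_order all_algebra.
From mathcomp Require Import all_classical all_reals all_analysis.
From mathcomp Require Import ring lra.
Import Order.TTheory GRing.Theory Num.Theory.
Import numFieldNormedType.Exports.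
Local Open Scope ring_scope.

(* Value and workload vectors are the unique solutions of policy-evaluation
   equations x = f + beta P x, uniqueness coming from the contraction of
   beta P in the sup norm.  Switching the action at the single state j turns
   the difference of two such solutions into a solution whose source is a
   multiple of the unit vector at j, the multiple being the marginal
   quantity c_j (for costs) or -w_j (for workloads), computed with either
   policy.  Two such solutions are proportional, which yields (a) and (b);
   (c) is (a) pushed through the linear maps defining c and w. *)

Definition bellman_eq {R : realType} {n : nat} (beta : R) (Q : 'M[R]_n)
    (f x : 'I_n -> R) : Prop :=
  forall i, x i = f i + beta * \sum_k Q i k * x k.

Definition discounted_sum {R : realType} {n : nat} (beta : R) (Q : 'M[R]_n)
    (f : 'cV[R]_n) (i : 'I_n) : R :=
  limn (fun N : nat => \sum_(t < N) beta ^+ t * (Q ^+ t *m f) i ord0).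

Section PolicyEvaluation.
Context {R : realType} {n : nat} {beta : R}.

Lemma bellman_eq_sub {Q Q' : 'M[R]_n} {f f' x x' : 'I_n -> R} :
  bellman_eq beta Q f x -> bellman_eq beta Q' f' x' ->
  bellman_eq beta Q' (fun i => f' i - f i + beta * \sum_k (Q' i k - Q i k) * x k)
    (fun i => x' i - x i) /\
  bellman_eq beta Q (fun i => f' i - f i + beta * \sum_k (Q' i k - Q i k) * x' k)
    (fun i => x' i - x i).
Proof.
have sumBr (a y z : 'I_n -> R) :
    \sum_k a k * (y k - z k) = \sum_k a k * y k - \sum_k a k * z k.
  by rewrite -sumrB; apply: eq_bigr => k _; rewrite mulrBr.
have sumBl (a a' y : 'I_n -> R) :
    \sum_k (a' k - a k) * y k = \sum_k a' k * y k - \sum_k a k * y k.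
  by rewrite -sumrB; apply: eq_bigr => k _; rewrite mulrBl.
move=> ex ex'; split=> i /=; rewrite {1}(ex i) {1}(ex' i) sumBr sumBl; ring.
Qed.

Lemma bellman_eq_lin {Q : 'M[R]_n} {f g x y : 'I_n -> R} (r : R) :
  bellman_eq beta Q f x -> bellman_eq beta Q g y ->
  bellman_eq beta Q (fun i => f i + r * g i) (fun i => x i + r * y i).
Proof.
move=> ex ey i /=; rewrite {1}(ex i) {1}(ey i).
under eq_bigr do rewrite mulrDr mulrCA.
rewrite big_split -mulr_sumr /=; ring.
Qed.

Hypothesis beta_ge0 : 0 <= beta.
Hypothesis beta_lt1 : beta < 1.

Lemma stochastic_sum_norm_le (Q : 'M[R]_n) (x : 'I_n -> R) (M : R) (i : 'I_n) :
  stochastic Q -> (forall k, `|x k| <= M) -> `|\sum_k Q i k * x k| <= M.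
Proof.
move=> [Q_ge0 Q_sum1] xM.
apply: le_trans (ler_norm_sum _ _ _) _.
apply: le_trans (_ : \sum_k Q i k * M <= M); last by rewrite -mulr_suml Q_sum1 mul1r.
by apply: ler_sum => k _; rewrite normrM ger0_norm // ler_wpM2l.
Qed.

Lemma stochastic_expmx_norm_le (Q : 'M[R]_n) (f : 'cV[R]_n) (t : nat) (i : 'I_n) :
  stochastic Q -> `|(Q ^+ t *m f) i ord0| <= \sum_k `|f k ord0|.
Proof.
move=> sQ; elim: t i => [|t IH] i.
  by rewrite expr0 mul1mx (bigD1 i) //= lerDl sumr_ge0.
rewrite exprS -mulmxE -mulmxA mxE.
by apply: stochastic_sum_norm_le.
Qed.

Lemma cvgn_discounted_partial_sum (a : nat -> R) (M : R) :
  (forall t, `|a t| <= M) ->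
  cvgn (fun N : nat => \sum_(t < N) beta ^+ t * a t).
Proof.
move=> aM; have M_ge0 : 0 <= M by apply: le_trans (aM 0%N).
have -> : (fun N : nat => \sum_(t < N) beta ^+ t * a t)
          = series (fun t => beta ^+ t * a t).
  by apply/funext => N; rewrite /series /= big_mkord.
apply: normed_cvg; apply: (@series_le_cvg _ _ (geometric M beta)).
- by move=> t; exact: normr_ge0.
- by move=> t; rewrite /geometric /= mulr_ge0 // exprn_ge0.
- move=> t; rewrite /geometric /= normrM (ger0_norm (exprn_ge0 _ beta_ge0)) mulrC.
  by rewrite ler_wpM2r // exprn_ge0.
- by apply: is_cvg_geometric_series; rewrite ger0_norm.
Qed.

Lemma discounted_sum_bellman (Q : 'M[R]_n) (f : 'cV[R]_n) :
  stochastic Q -> bellman_eq beta Q (fun i => f i ord0) (discounted_sum beta Q f).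
Proof.
move=> sQ i.
pose u k N := \sum_(t < N) beta ^+ t * (Q ^+ t *m f) k ord0.
have cvg_u k : cvgn (u k).
  apply: (cvgn_discounted_partial_sum (fun t => (Q ^+ t *m f) k ord0)
    (\sum_k `|f k ord0|)) => t.
  exact: stochastic_expmx_norm_le.
have uS N : u i N.+1 = f i ord0 + beta * \sum_k Q i k * u k N.
  rewrite /u big_ord_recl /= expr0 mul1r mul1mx; congr (_ + _).
  rewrite mulr_sumr; under [RHS]eq_bigr => k _ do rewrite !mulr_sumr.
  rewrite exchange_big; apply: eq_bigr => t _.
  rewrite /bump /= add1n !exprS -mulmxE -mulmxA mxE mulr_sumr.
  by apply: eq_bigr => k _; ring.
apply: cvg_lim => //; rewrite -(cvg_shiftS (u i)).
under eq_cvg do rewrite /= uS.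
apply: cvgD; first exact: cvg_cst.
apply: cvgMl_tmp; apply: (@cvg_big _ _ +%R 0 xpredT add_continuous) => // k _.
exact: cvgMl_tmp (cvg_u k).
Qed.

Lemma bellman_eq0 {Q : 'M[R]_n} {x : 'I_n -> R} :
  stochastic Q -> bellman_eq beta Q (fun=> 0) x -> forall i, x i = 0.
Proof.
move=> sQ ex i.
have [m _ x_max] := @arg_maxP _ R 'I_n i xpredT (fun k => `|x k|) isT.
have xm_le : `|x m| <= beta * `|x m|.
  rewrite {1}(ex m) add0r normrM ger0_norm // ler_wpM2l //.
  by apply: stochastic_sum_norm_le => // k; apply: x_max.
have xm_le0 : `|x m| <= 0.
  have b1 : beta - 1 < 0 by rewrite subr_lt0.
  by rewrite -(nmulr_rge0 _ b1) mulrBl mul1r subr_ge0.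
by apply/eqP; rewrite -normr_le0 (le_trans (x_max i isT) xm_le0).
Qed.

Lemma bellman_eq_delta_eq0 {Q : 'M[R]_n} {j : 'I_n} {a : R} {x : 'I_n -> R} :
  stochastic Q -> bellman_eq beta Q (fun i => (i == j)%:R * a) x ->
  (forall i, x i = 0) <-> a == 0.
Proof.
move=> sQ ex; split=> [x0 | /eqP a0].
  apply/eqP; have := ex j; rewrite x0 eqxx mul1r big1 ?mulr0 ?addr0 // => k _.
  by rewrite x0 mulr0.
by apply: (bellman_eq0 sQ) => i; rewrite (ex i) a0 mulr0.
Qed.

Lemma bellman_eq_delta_prop {Q : 'M[R]_n} {j : 'I_n} {a g : R} {x y : 'I_n -> R} :
  stochastic Q -> g != 0 ->
  bellman_eq beta Q (fun i => (i == j)%:R * a) x ->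
  bellman_eq beta Q (fun i => (i == j)%:R * g) y ->
  forall i, x i = a / g * y i.
Proof.
move=> sQ g0 ex ey i.
have exy := bellman_eq_lin (- (a / g)) ex ey.
have src0 : bellman_eq beta Q (fun=> 0) (fun k => x k + - (a / g) * y k).
  by move=> k; rewrite {1}(exy k) /= mulNr mulrCA divfK // subrr.
by have /= := bellman_eq0 sQ src0 i; lra.
Qed.

End PolicyEvaluation.

Section Bandit.
Context {R : realType} {n : nat} {N01 : {set 'I_n}} {P0 P1 : 'M[R]_n}
  {h0 h1 theta : 'I_n -> R} {beta : R}.
Hypothesis model : bandit_model N01 P0 P1 h0 h1 theta beta.

Local Notation active := (active N01).
Local Notation PS := (PS N01 P0 P1).
Local Notation v := (v N01 P0 P1 h0 h1 beta).
Local Notation b := (b N01 P0 P1 theta beta).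
Local Notation w := (w N01 P0 P1 theta beta).
Local Notation c := (c N01 P0 P1 h0 h1 beta).

Let beta_ge0 : 0 <= beta.
Proof. by case: model => _ _ _ _ [_ /andP[/ltW]]. Qed.

Let beta_lt1 : beta < 1.
Proof. by case: model => _ _ _ _ [_ /andP[]]. Qed.

Definition policy_cost (S : {set 'I_n}) (g0 g1 : 'I_n -> R) (i : 'I_n) : R :=
  if active S i then g1 i else g0 i.

Lemma stochastic_PS (S : {set 'I_n}) : stochastic (PS S).
Proof.
case: model => [[P0_ge0 P0_sum1] [P1_ge0 P1_sum1] _ _ _]; split.
  by move=> i j; rewrite mxE; case: ifP.
move=> i; under eq_bigr do rewrite mxE.
by case: (active S i).
Qed.

Lemma policy_bellman (S : {set 'I_n}) (g0 g1 : 'I_n -> R) :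
  bellman_eq beta (PS S) (policy_cost S g0 g1)
    (disc_total N01 P0 P1 beta S (\col_i policy_cost S g0 g1 i)).
Proof.
move=> i; have := discounted_sum_bellman beta_ge0 beta_lt1
  _ (\col_i policy_cost S g0 g1 i) (stochastic_PS S) i.
by rewrite mxE.
Qed.

Lemma bellman_eq_setD1 {S : {set 'I_n}} {j : 'I_n} {g0 g1 x y : 'I_n -> R} :
  j \in S -> j \in N01 ->
  bellman_eq beta (PS S) (policy_cost S g0 g1) x ->
  bellman_eq beta (PS (S :\ j)) (policy_cost (S :\ j) g0 g1) y ->
  let marginal z := g0 j - g1 j + beta * \sum_k (P0 j k - P1 j k) * z k in
  bellman_eq beta (PS (S :\ j)) (fun i => (i == j)%:R * marginal x)
    (fun i => y i - x i) /\
  bellman_eq beta (PS S) (fun i => (i == j)%:R * marginal y)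
    (fun i => y i - x i).
Proof.
move=> jS jN ex ey marginal; have [eT eS] := bellman_eq_sub ex ey.
have source (z : 'I_n -> R) i :
    policy_cost (S :\ j) g0 g1 i - policy_cost S g0 g1 i
    + beta * \sum_k (PS (S :\ j) i k - PS S i k) * z k = (i == j)%:R * marginal z.
  rewrite /policy_cost; case: (eqVneq i j) => [-> | ne].
    have aS : active S j by rewrite /active jS.
    have aT : active (S :\ j) j = false by rewrite /active !inE eqxx jN.
    under eq_bigr do rewrite !mxE aS aT.
    by rewrite aS aT mul1r.
  have a_eq : active (S :\ j) i = active S i by rewrite /active !inE ne.
  under eq_bigr do rewrite !mxE a_eq subrr mul0r.
  by rewrite a_eq big1 // subrr mulr0 addr0 mul0r.
by split=> i; rewrite -source; [exact: eT | exact: eS].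
Qed.

Lemma v_setD1 {S : {set 'I_n}} {j : 'I_n} : j \in S -> j \in N01 ->
  bellman_eq beta (PS (S :\ j)) (fun i => (i == j)%:R * c S j)
    (fun i => v (S :\ j) i - v S i) /\
  bellman_eq beta (PS S) (fun i => (i == j)%:R * c (S :\ j) j)
    (fun i => v (S :\ j) i - v S i).
Proof.
by move=> jS jN; exact: bellman_eq_setD1 jS jN (policy_bellman S h0 h1)
  (policy_bellman (S :\ j) h0 h1).
Qed.

Lemma b_setD1 {S : {set 'I_n}} {j : 'I_n} : j \in S -> j \in N01 ->
  bellman_eq beta (PS (S :\ j)) (fun i => (i == j)%:R * - w S j)
    (fun i => b (S :\ j) i - b S i) /\
  bellman_eq beta (PS S) (fun i => (i == j)%:R * - w (S :\ j) j)
    (fun i => b (S :\ j) i - b S i).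
Proof.
move=> jS jN.
have wE T : 0 - theta j + beta * \sum_k (P0 j k - P1 j k) * b T k = - w T j.
  rewrite /w jN mulr1; under eq_bigr do rewrite -opprB mulNr.
  by rewrite sumrN; ring.
have [eT eS] := bellman_eq_setD1 jS jN (policy_bellman S (fun=> 0) theta)
  (policy_bellman (S :\ j) (fun=> 0) theta).
by split=> i; rewrite -wE; [exact: eT | exact: eS].
Qed.

Lemma b_setD1_eq_w0 {S : {set 'I_n}} {j : 'I_n} : j \in S -> j \in N01 ->
  ((forall i, b (S :\ j) i - b S i = 0) <-> w S j == 0) /\
  ((forall i, b (S :\ j) i - b S i = 0) <-> w (S :\ j) j == 0).
Proof.
move=> jS jN; have [eT eS] := b_setD1 jS jN.
rewrite -[w S j == 0]oppr_eq0 -[w (S :\ j) j == 0]oppr_eq0.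
by split; [exact: (bellman_eq_delta_eq0 beta_ge0 beta_lt1 (stochastic_PS _) eT)
         | exact: (bellman_eq_delta_eq0 beta_ge0 beta_lt1 (stochastic_PS _) eS)].
Qed.

Lemma v_sub_setD1 {S : {set 'I_n}} {j : 'I_n} :
  j \in S -> j \in N01 -> w S j != 0 -> w (S :\ j) j != 0 ->
  (forall i, v (S :\ j) i - v S i = c S j / w S j * (b S i - b (S :\ j) i)) /\
  (forall i, v (S :\ j) i - v S i
             = c (S :\ j) j / w (S :\ j) j * (b S i - b (S :\ j) i)).
Proof.
move=> jS jN wS_neq0 wSj_neq0.
have [dT dS] := v_setD1 jS jN; have [eT eS] := b_setD1 jS jN.
have flip (a g : R) i :
    a / - g * (b (S :\ j) i - b S i) = a / g * (b S i - b (S :\ j) i).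
  by rewrite invrN mulrN mulNr -mulrN opprB.
split=> i; rewrite -flip.
  by apply: (bellman_eq_delta_prop beta_ge0 beta_lt1 (stochastic_PS _) _ dT eT);
    rewrite oppr_eq0.
by apply: (bellman_eq_delta_prop beta_ge0 beta_lt1 (stochastic_PS _) _ dS eS);
  rewrite oppr_eq0.
Qed.

Lemma c_sub_of_v_sub (S T : {set 'I_n}) (r : R) :
  (forall k, v T k - v S k = r * (b S k - b T k)) ->
  forall i, c S i - c T i = r * (w S i - w T i).
Proof.
move=> vT_sub i; rewrite /c /w.
have -> : \sum_k (P0 i k - P1 i k) * v S k = \sum_k (P0 i k - P1 i k) * v T k
    + r * (\sum_k (P1 i k - P0 i k) * b S k - \sum_k (P1 i k - P0 i k) * b T k).
  rewrite -sumrB mulr_sumr -big_split; apply: eq_bigr => k _ /=.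
  have -> : v T k = r * (b S k - b T k) + v S k by rewrite -vT_sub subrK.
  ring.
ring.
Qed.

End Bandit.

Theorem proposition7 (R : realType) (n : nat) (N01 : {set 'I_n})
  (P0 P1 : 'M[R]_n) (h0 h1 theta : 'I_n -> R) (beta : R)
  (F : {set {set 'I_n}}) :
  bandit_model N01 P0 P1 h0 h1 theta beta ->
  (forall S, S \in F -> S \subset N01) ->
  (forall S, S \in F -> forall j, j \in N01 ->
     0 < w N01 P0 P1 theta beta S j) ->
  forall S, S \in F -> forall j, j \in S ->
  let vv := v N01 P0 P1 h0 h1 beta in
  let bb := b N01 P0 P1 theta beta in
  let ww := w N01 P0 P1 theta beta in
  let cc := c N01 P0 P1 h0 h1 beta in
  let Sj := S :\ j in
  [/\ (* (a) *)
      (forall i, vv Sj i - vv S i = cc S j / ww S j * (bb S i - bb Sj i)) /\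
      (forall i, cc S j / ww S j * (bb S i - bb Sj i)
                 = cc Sj j / ww Sj j * (bb S i - bb Sj i)),
      (* (b) *)
      cc S j / ww S j = cc Sj j / ww Sj j &
      (* (c) *)
      (forall i, cc S i - cc Sj i = cc S j / ww S j * (ww S i - ww Sj i))].
Proof.
move=> model sub_N01 w_gt0 S SF j jS vv bb ww cc Sj.
have jN : j \in N01 by apply: (fintype.subsetP (sub_N01 S SF)).
have wS_neq0 : ww S j != 0 by rewrite gt_eqF ?w_gt0.
have [b_eq_wS0 b_eq_wSj0] := b_setD1_eq_w0 model jS jN.
have wSj_neq0 : ww Sj j != 0.
  by apply/negP => /b_eq_wSj0 /b_eq_wS0; apply/negP.
have [a1 a2] := v_sub_setD1 model jS jN wS_neq0 wSj_neq0.
have ratio : cc S j / ww S j = cc Sj j / ww Sj j.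
  have [k /eqP bk] : exists k, ~ (bb Sj k - bb S k = 0).
    by apply/existsNP => /b_eq_wS0; apply/negP.
  by apply: (mulIf (_ : bb S k - bb Sj k != 0)); rewrite -?a1 -?a2 // -opprB oppr_eq0.
split=> //; first by split=> i; [exact: a1 | rewrite ratio].
exact: c_sub_of_v_sub a1.
Qed.
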